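(* Let $X\subset\mathbb{Z}^n$ and let $d$ be an $\ell_p$ metric on $X$ for some $1\le p\le\infty$, so that $(X,d,c_1)$ is a digital metric space. Let $T:X\to X$ be a weakly uniformly strict digital contraction. If $X$ is $c_1$-connected, then $T$ is constant.
   Context: Distinct $p,q\in\mathbb{Z}^n$ are $c_1$-adjacent if they differ by exactly $1$ in exactly one coordinate. $X$ is $c_1$-connected if the graph on $X$ given by $c_1$-adjacency is connected. The $\ell_p$ metric is $d(x,y)=(\sum_i|x_i-y_i|^p)^{1/p}$ for $1\le p<\infty$ and $\max_i|x_i-y_i|$ for $p=\infty$. $T:X\to X$ is a weakly uniformly strict digital contraction if for every $\varepsilon>0$ there exists $\delta>0$ such that for all $x,y\in X$, $\varepsilon\le d(x,y)<\varepsilon+\delta$ implies $d(T(x),T(y))<\varepsilon$. *)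

From HB Require Import structures.
From mathcomp Require Import all_boot all_order all_algebra.
From mathcomp Require Import all_classical all_reals.
From mathcomp Require Import exp.
Set Implicit Arguments. Unset Strict Implicit. Unset Printing Implicit Defensive.
Import Order.TTheory GRing.Theory Num.Theory.
Local Open Scope ring_scope.

Definition zpt (n : nat) := 'I_n -> int.

Definition c1_adj (n : nat) (x y : zpt n) : Prop :=
  exists i : 'I_n, `|x i - y i| = 1 /\ (forall j : 'I_n, j != i -> x j = y j).

Inductive c1_reach (n : nat) (X : set (zpt n)) : zpt n -> zpt n -> Prop :=
| c1_reach_refl x : X x -> c1_reach X x x
| c1_reach_step x y z : c1_reach X x y -> c1_adj y z -> X z -> c1_reach X x z.

Definition c1_connected (n : nat) (X : set (zpt n)) : Prop :=
  forall x y, X x -> X y -> c1_reach X x y.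

(* The l_p metric, p : \bar R with 1 <= p; p = +oo gives the max metric. *)
Definition lp_dist (R : realType) (n : nat) (p : \bar R) (x y : zpt n) : R :=
  match p with
  | EFin r => (\sum_(i < n) (`|x i - y i|%:~R : R) `^ r) `^ r^-1
  | _ => \big[Num.max/0]_(i < n) (`|x i - y i|%:~R : R)
  end.

Definition wus_contraction (R : realType) (n : nat) (X : set (zpt n))
  (d : zpt n -> zpt n -> R) (T : zpt n -> zpt n) : Prop :=
  forall eps : R, 0 < eps -> exists2 delta : R, 0 < delta &
    forall x y, X x -> X y -> eps <= d x y -> d x y < eps + delta ->
      d (T x) (T y) < eps.

(* Distinct points of Z^n are at l_p distance at least 1, and c_1-adjacent points at distance
   exactly 1.  Taking eps = 1 in the contraction property, the images of adjacent points are at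
   distance < 1, hence equal; along c_1-paths this makes T constant. *)
From HB Require Import structures.
From mathcomp Require Import all_boot all_order all_algebra.
From mathcomp Require Import all_classical all_reals exp.
Set Implicit Arguments. Unset Strict Implicit. Unset Printing Implicit Defensive.
Import Order.TTheory GRing.Theory Num.Theory.
Local Open Scope ring_scope.

Section LpDistOnIntegerPoints.
Variables (R : realType) (n : nat) (p : \bar R).
Hypothesis p_ge1 : (1 <= p)%E.

Lemma lp_dist_c1_adj (x y : zpt n) : c1_adj x y -> lp_dist p x y = 1.
Proof.
move=> [i0 [xy_i0 xy_eq]].
have delta_ind i : (`|x i - y i|%:~R : R) = (i == i0)%:R.
  by case: eqP => [->|/eqP ne]; rewrite ?xy_i0 // xy_eq // subrr.
case: p p_ge1 => [r r_ge1| _ |] //=; last first.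
  apply/le_anti/andP; split.
    by apply: bigmax_le => // i _; rewrite delta_ind; case: (i == i0).
  by have := le_bigmax 0 (fun i => (`|x i - y i|%:~R : R)) i0; rewrite delta_ind eqxx.
rewrite lee_fin in r_ge1.
have r_neq0 : r != 0 by rewrite gt_eqF // (lt_le_trans ltr01).
rewrite (bigD1 i0) //= big1 ?addr0; first by rewrite delta_ind eqxx !powR1.
by move=> i /negbTE ne; rewrite delta_ind ne powR0.
Qed.

Lemma lp_dist_ge1 (x y : zpt n) : x <> y -> 1 <= lp_dist p x y.
Proof.
move=> x_neq_y.
have [i xy_i] : exists i, x i != y i.
  apply: contrapT => /forallNP x_eq_y; apply: x_neq_y; apply: funext => i.
  by apply/eqP/negPn/negP/x_eq_y.
have delta_i_ge1 : 1 <= (`|x i - y i|%:~R : R).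
  by rewrite ler1z -gtz0_ge1 normr_gt0 subr_eq0.
case: p p_ge1 => [r r_ge1| _ |] //=; last first.
  exact: le_trans delta_i_ge1 (le_bigmax 0 (fun j => (`|x j - y j|%:~R : R)) i).
rewrite lee_fin in r_ge1.
have sum_ge1 : 1 <= \sum_(j < n) (`|x j - y j|%:~R : R) `^ r.
  have pow_ge1 := le_trans delta_i_ge1 (le1r_powR delta_i_ge1 r_ge1).
  rewrite (bigD1 i) //=; apply: le_trans pow_ge1 _.
  by rewrite lerDl sumr_ge0 // => j _; exact: powR_ge0.
have r_inv_ge0 : 0 <= r^-1 by rewrite invr_ge0 (le_trans ler01 r_ge1).
by have := ler_powR sum_ge1 r_inv_ge0; rewrite powRr0.
Qed.

End LpDistOnIntegerPoints.

Lemma wus_contraction_lt (R : realType) (n : nat) (X : set (zpt n))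
  (d : zpt n -> zpt n -> R) (T : zpt n -> zpt n) (x y : zpt n) :
  wus_contraction X d T -> X x -> X y -> 0 < d x y -> d (T x) (T y) < d x y.
Proof.
move=> T_wus Xx Xy dxy_gt0; have [delta delta_gt0 T_contr] := T_wus _ dxy_gt0.
by apply: T_contr; rewrite // ltrDl.
Qed.

Lemma c1_reach_memr (n : nat) (X : set (zpt n)) (x y : zpt n) :
  c1_reach X x y -> X y.
Proof. by case. Qed.

Lemma c1_connected_locally_const (n : nat) (X : set (zpt n)) (A : Type)
  (f : zpt n -> A) :
  c1_connected X -> (forall a b, X a -> X b -> c1_adj a b -> f a = f b) ->
  forall x y, X x -> X y -> f x = f y.
Proof.
move=> X_conn f_adj x y Xx Xy.
elim: (X_conn x y Xx Xy) => // a b c reach_ab fab adj_bc Xc.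
by rewrite fab; apply: f_adj (c1_reach_memr reach_ab) Xc adj_bc.
Qed.

Theorem corollary8p6 (R : realType) (n : nat) (X : set (zpt n)) (p : \bar R)
  (hp : (1 <= p)%E) (T : zpt n -> zpt n) (hTX : forall x, X x -> X (T x))
  (hT : wus_contraction X (lp_dist p) T) (hX : c1_connected X) :
  forall x y, X x -> X y -> T x = T y.
Proof.
apply: c1_connected_locally_const hX _ => a b Xa Xb adj_ab.
have dab_eq1 := lp_dist_c1_adj hp adj_ab.
have dT_lt1 : lp_dist p (T a) (T b) < 1.
  by rewrite -[X in _ < X]dab_eq1 (wus_contraction_lt hT) // dab_eq1 ltr01.
apply: contrapT => Ta_neq_Tb.
by have := lp_dist_ge1 hp Ta_neq_Tb; rewrite leNgt dT_lt1.
Qed.
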